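(* Let $G$ be a graph with bandwidth $\mathrm{bw}(G)=b$, and let $H$ be a two-terminal edge gadget on $t\ge 2$ vertices. Let $G_H$ be the graph obtained from $G$ by replacing every edge of $G$ by $H$. Then \[ \mathrm{bw}(G_H)\le (b+1)\bigl(1+(t-2)b\bigr). \]
   Context: Graphs are finite and simple. For a graph $G$ on $n$ vertices, $\mathrm{bw}(G)=\min_{\sigma}\max_{uv\in E(G)}|\sigma(u)-\sigma(v)|$, where the minimum ranges over all bijections $\sigma:V(G)\to[n]$. A two-terminal edge gadget is a graph $H$ with two distinguished distinct attachment vertices $\alpha,\beta$. Replacing an edge $uv$ of a graph by $H$ means deleting $uv$, adding a fresh copy $H_{uv}$ of $H$ (disjoint from everything else), and identifying its two attachment vertices with $u$ and $v$ (in either order); replacing every edge does this simultaneously for all edges with independent fresh copies. *)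

From HB Require Import structures.
From mathcomp Require Import all_boot.
Set Implicit Arguments. Unset Strict Implicit. Unset Printing Implicit Defensive.

Definition simple_graph (T : finType) (e : rel T) : Prop :=
  symmetric e /\ irreflexive e.

Definition ndist (m n : nat) : nat := (m - n) + (n - m).

Definition bw_width (T : finType) (e : rel T) (s : T -> nat) : nat :=
  \max_(u : T) \max_(v : T | e u v) ndist (s u) (s v).

(* bandwidth: minimum of the width over all bijections V -> [n]
   (injective maps T -> 'I_#|T| are exactly the bijections; positions are
   0-based, which does not affect differences).  The initial value #|T| of
   the min is never attained as a bijection always exists and has width
   < #|T| (or the graph is empty, where both are 0). *)
Definition bandwidth (T : finType) (e : rel T) : nat :=
  \big[minn/#|T|]_(s : {ffun T -> 'I_#|T|} | injectiveb s)
     bw_width e (fun x => nat_of_ord (s x)).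

Section Replace.
Variables (T U : finType) (e : rel T) (o : rel T) (h : rel U) (a b : U).

(* Oriented edges of G: each edge uv of G is represented once, by the pair
   (u,v) with o u v; in the copy H_uv, a is identified with u and b with v. *)
Definition oedge : finType := {p : T * T | e p.1 p.2 && o p.1 p.2}.
Definition inner : finType := {x : U | (x != a) && (x != b)}.
Definition GH_vertex : finType := (T + oedge * inner)%type.

Definition attach (p : oedge) (x : U) : GH_vertex :=
  if x == a then inl (val p).1
  else if x == b then inl (val p).2
  else match (insub x : option inner) with
       | Some y => inr (p, y)
       | None => inl (val p).1 (* unreachable *)
       end.

(* Edges of G_H: exactly the images of edges of the copies H_p
   (all original edges of G are deleted). *)
Definition GH_rel : rel GH_vertex := fun w1 w2 =>
  [exists p : oedge, exists x : U, exists y : U,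
     [&& h x y, attach p x == w1 & attach p y == w2]].
End Replace.

From HB Require Import structures.
From mathcomp Require Import all_boot zify.
From Stdlib Require Import Lia.
Set Implicit Arguments. Unset Strict Implicit.

(* Spread an optimal layout s of G by the factor M = 1 + (t-2)b, putting each
   vertex v of G at s(v)M.  A copy of H on an edge uv with s(u) < s(v) = s(u) + d
   (1 <= d <= b) puts its t-2 inner vertices into the d-th of b consecutive
   slots of t-2 positions in the gap just after s(u)M; two edges with the same
   lower end have different d, so the layout is injective.  The whole copy lies
   in [s(u)M, s(v)M], so every edge of G_H is stretched by at most bM.  Finally,
   replacing an injective layout by the ranks of its values gives a bijection
   onto [n] that does not increase any distance. *)

Lemma bigmin_le (I : finType) (P : pred I) (F : I -> nat) x0 j :
  P j -> \big[minn/x0]_(i | P i) F i <= F j.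
Proof.
move=> Pj; have : j \in index_enum I by rewrite mem_index_enum.
elim: (index_enum I) => //= i r IH; rewrite inE big_cons => /predU1P [<-|/IH {}IH].
  by rewrite Pj geq_minl.
by case: (P i) => //; rewrite geq_min IH orbT.
Qed.

Lemma bw_width_le (T : finType) (e : rel T) (s : T -> nat) W :
  (forall u v, e u v -> ndist (s u) (s v) <= W) -> bw_width e s <= W.
Proof. by move=> H; apply/bigmax_leqP => u _; apply/bigmax_leqP => v; apply: H. Qed.

Lemma bw_width_edge (T : finType) (e : rel T) (s : T -> nat) u v :
  e u v -> ndist (s u) (s v) <= bw_width e s.
Proof.
move=> euv; apply: leq_trans (leq_bigmax_cond _ (isT : predT u)).
exact: (@leq_bigmax_cond _ (e u) (fun v => ndist (s u) (s v)) v euv).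
Qed.

Lemma ndist_ord_le n (i j : 'I_n) : ndist i j <= n.
Proof. by rewrite /ndist; have := ltn_ord i; have := ltn_ord j; lia. Qed.

Lemma bandwidth_witness (T : finType) (e : rel T) :
  exists2 s : T -> nat, injective s &
    forall u v, e u v -> ndist (s u) (s v) <= bandwidth e.
Proof.
pose good x := exists2 s : {ffun T -> 'I_#|T|}, injectiveb s &
  bw_width e (fun x => nat_of_ord (s x)) <= x.
have [s s_inj s_width] : good (bandwidth e).
  apply: big_ind => [|x y [s1 inj1 w1] [s2 inj2 w2]|s ?]; last by exists s.
  - exists [ffun x => enum_rank x].
      by apply/injectiveP => x y; rewrite !ffunE => /enum_rank_inj.
    by apply: bw_width_le => u v _; rewrite !ffunE; apply: ndist_ord_le.
  - by case: (leqP x y) => xy; [exists s1|exists s2]; rewrite // leq_min; lia.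
exists (fun x => nat_of_ord (s x)); first by move=> x y /ord_inj; apply/injectiveP.
by move=> u v euv; apply: leq_trans (bw_width_edge _ euv) s_width.
Qed.

Section RankCompression.
Variables (V : finType) (f : V -> nat).
Hypothesis f_inj : injective f.

Definition rank_of x := #|[set y | f y < f x]|.

Lemma rank_of_lt x : rank_of x < #|V|.
Proof.
rewrite /rank_of -(cardsC [set y | f y < f x]).
suff : 0 < #|~: [set y | f y < f x]| by lia.
by apply/card_gt0P; exists x; rewrite !inE ltnn.
Qed.

Lemma rank_of_monotone x y :
  f x < f y -> rank_of x < rank_of y /\ rank_of y - rank_of x <= f y - f x.
Proof.
move=> fxy; rewrite /rank_of.
set A := [set z | f z < f y]; set B := [set z | f z < f x].
have sBA : B \subset A by apply/subsetP => z; rewrite !inE; lia.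
have cardAB := cardsD A B; rewrite (setIidPr sBA) in cardAB.
have := subset_leq_card sBA.
have : 0 < #|A :\: B| by apply/card_gt0P; exists x; rewrite !inE ltnn fxy.
have : #|A :\: B| <= f y - f x.
  rewrite cardE -(size_map f) -[f y - f x](size_iota (f x)).
  apply: uniq_leq_size; first by rewrite (map_inj_uniq f_inj) enum_uniq.
  move=> n /mapP [z]; rewrite mem_enum !inE -leqNgt => /andP [? ?] ->.
  rewrite mem_iota; lia.
lia.
Qed.

Lemma rank_of_inj : injective rank_of.
Proof.
move=> x y rxy; case: (ltngtP (f x) (f y)) => [|/rank_of_monotone|/f_inj //].
  by move/rank_of_monotone; lia.
by lia.
Qed.

Lemma ndist_rank_of x y : ndist (rank_of x) (rank_of y) <= ndist (f x) (f y).
Proof.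
rewrite /ndist.
by case: (ltngtP (f x) (f y)) => [/rank_of_monotone|/rank_of_monotone|/f_inj ->]; lia.
Qed.
End RankCompression.

Lemma bandwidth_le (T : finType) (e : rel T) (f : T -> nat) W :
  injective f -> (forall u v, e u v -> ndist (f u) (f v) <= W) ->
  bandwidth e <= W.
Proof.
move=> f_inj f_width.
pose s : {ffun T -> 'I_#|T|} := [ffun x => Ordinal (rank_of_lt f x)].
have s_inj : injectiveb s.
  by apply/injectiveP => x y; rewrite !ffunE => /(congr1 val) /(rank_of_inj f_inj).
apply: leq_trans (bigmin_le _ _ s_inj) _.
apply: bw_width_le => u v euv; rewrite !ffunE /=.
exact: leq_trans (ndist_rank_of f_inj u v) (f_width u v euv).
Qed.

Lemma divmod_inj d q1 r1 q2 r2 :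
  r1 < d -> r2 < d -> q1 * d + r1 = q2 * d + r2 -> q1 = q2 /\ r1 = r2.
Proof.
by move=> r1d r2d E; have := edivn_eq q1 r1d; rewrite E edivn_eq // => -[-> ->].
Qed.

Section Layout.
Variables (T U : finType) (e o : rel T) (h : rel U) (a b : U).
Hypotheses (e_irr : irreflexive e) (ab : a != b)
  (o_asym : forall u v, e u v -> o u v != o v u).
Variables (bG : nat) (s : T -> nat).
Hypotheses (s_inj : injective s)
  (s_width : forall u v, e u v -> ndist (s u) (s v) <= bG).

Let K := #|U| - 2.
Let M := 1 + K * bG.

Lemma card_inner : #|inner a b| = K.
Proof.
rewrite card_sig /K.
have -> : #|[pred x | (x != a) && (x != b)]| = #|[set: U] :\ a :\ b|.
  by apply: eq_card => x; rewrite !inE andbT andbC.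
have := cardsD1 b ([set: U] :\ a); rewrite !inE eq_sym ab.
have := cardsD1 a [set: U]; rewrite !inE cardsT; lia.
Qed.

Definition lo (p : oedge e o) : T :=
  if s (val p).1 < s (val p).2 then (val p).1 else (val p).2.
Definition hi (p : oedge e o) : T :=
  if s (val p).1 < s (val p).2 then (val p).2 else (val p).1.
Definition span (p : oedge e o) : nat := s (hi p) - s (lo p).

Lemma lo_lt_hi p : s (lo p) < s (hi p).
Proof.
rewrite /lo /hi; case: p => [[u v] /= /andP [euv _]].
have : s u != s v by apply: contraTneq euv => /s_inj ->; rewrite e_irr.
by rewrite neq_ltn; case: ltnP.
Qed.

Lemma span_le p : span p <= bG.
Proof.
rewrite /span /lo /hi; case: p => [[u v] /= /andP [/s_width]].
by rewrite /ndist; case: ltnP; lia.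
Qed.

Lemma ends_between p :
  s (lo p) <= s (val p).1 <= s (hi p) /\ s (lo p) <= s (val p).2 <= s (hi p).
Proof. by rewrite /lo /hi; case: ltnP; lia. Qed.

Lemma lo_hi_inj p q : lo p = lo q -> hi p = hi q -> p = q.
Proof.
case: p q (valP p) (valP q) => [[u1 v1] ?] [[u2 v2] ?] /= /andP [e1 o1] /andP [_ o2].
rewrite /lo /hi /= => elo ehi; apply: val_inj; move: elo ehi => /=.
by do 2 case: ifP => _; move=> ? ?; subst => //; have := o_asym e1; rewrite o1 o2.
Qed.

Definition slot (p : oedge e o) (x : inner a b) : nat :=
  1 + (span p).-1 * K + enum_rank x.

Lemma enum_rank_inner_lt (x : inner a b) : enum_rank x < K.
Proof. by rewrite -card_inner. Qed.

Lemma slot_le_span p x : slot p x <= span p * K.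
Proof.
rewrite /slot; have [d ->] : exists d, span p = d.+1.
  by exists (span p).-1; have := lo_lt_hi p; rewrite /span; lia.
by have := enum_rank_inner_lt x; rewrite mulSn /=; lia.
Qed.

Lemma slot_lt p x : slot p x < M.
Proof.
have := slot_le_span p x; have : span p * K <= bG * K by rewrite leq_mul2r span_le orbT.
rewrite /M mulnC; lia.
Qed.

Lemma slot_inj p1 x1 p2 x2 : slot p1 x1 = slot p2 x2 -> span p1 = span p2 /\ x1 = x2.
Proof.
move/eqP; rewrite /slot -!addnA eqn_add2l => /eqP.
move/divmod_inj => /(_ (enum_rank_inner_lt x1) (enum_rank_inner_lt x2)) [].
have := lo_lt_hi p1; have := lo_lt_hi p2; rewrite /span => ? ? ? /ord_inj/enum_rank_inj.
by split=> //; lia.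
Qed.

Definition layout (w : GH_vertex e o a b) : nat :=
  match w with
  | inl v => s v * M
  | inr (p, x) => s (lo p) * M + slot p x
  end.

Lemma layout_inj : injective layout.
Proof.
have M_gt0 : 0 < M by [].
move=> [v1|[p1 x1]] [v2|[p2 x2]] /=.
- by move/eqP; rewrite eqn_pmul2r // => /eqP/s_inj ->.
- by rewrite -[s v1 * M]addn0 => /(divmod_inj M_gt0 (slot_lt p2 x2)) [_].
- by rewrite -[s v2 * M]addn0 => /(divmod_inj (slot_lt p1 x1) M_gt0) [_].
- move/(divmod_inj (slot_lt p1 x1) (slot_lt p2 x2)) => [/s_inj elo].
  case/slot_inj; rewrite /span elo => ehi ->.
  have /s_inj : s (hi p1) = s (hi p2) by have := lo_lt_hi p1; have := lo_lt_hi p2; lia.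
  by move/(lo_hi_inj elo) ->.
Qed.

Lemma layout_attach p z : s (lo p) * M <= layout (attach a b p z) <= s (hi p) * M.
Proof.
have end_ok v : s (lo p) <= s v <= s (hi p) -> s (lo p) * M <= s v * M <= s (hi p) * M.
  by case/andP=> ? ?; rewrite !leq_mul2r; apply/andP; split; apply/orP; right.
have [end1 end2] := ends_between p.
rewrite /attach; case: ifP => _; first exact: end_ok.
case: ifP => _; first exact: end_ok.
case: insub => [x|] /=; last exact: end_ok.
have : slot p x <= span p * M.
  by apply: leq_trans (ltnW (slot_lt p x)) (leq_pmull _ _); rewrite subn_gt0 lo_lt_hi.
have : s (lo p) * M <= s (hi p) * M by rewrite leq_mul2r ltnW ?lo_lt_hi ?orbT.
rewrite /span mulnBl; lia.
Qed.

Lemma bandwidth_GH_le : bandwidth (@GH_rel T U e o h a b) <= bG * M.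
Proof.
apply: (bandwidth_le layout_inj).
move=> w1 w2 /existsP [p /existsP [x /existsP [y /and3P [_ /eqP <- /eqP <-]]]].
have : span p * M <= bG * M by rewrite leq_mul2r span_le orbT.
have := layout_attach p x; have := layout_attach p y.
have := lo_lt_hi p; rewrite /span /ndist mulnBl; lia.
Qed.
End Layout.

Theorem mainTheorem16 (T U : finType) (e : rel T) (h : rel U) (a b : U)
    (o : rel T) (bG : nat) :
  simple_graph e -> simple_graph h -> a != b -> 2 <= #|U| ->
  (forall u v, e u v -> o u v != o v u) ->
  bandwidth e = bG ->
  bandwidth (@GH_rel T U e o h a b) <= (bG + 1) * (1 + (#|U| - 2) * bG).
Proof.
move=> [_ e_irr] _ ab _ o_asym <-.
have [s s_inj s_width] := bandwidth_witness e.
apply: leq_trans (bandwidth_GH_le h e_irr ab o_asym s_inj s_width) _.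
by rewrite leq_mul2r addn1 leqnSn orbT.
Qed.
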